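(* Let $\Gamma$ be a finite simplicial graph and $\mathbb{J}$ a collection of induced proper subgraphs of $\Gamma$. Assume that the right-angled Coxeter group $G_\Gamma$ is one-ended and hyperbolic relative to $\mathbb{P}=\{G_J : J\in\mathbb{J}\}$, and that each subgroup in $\mathbb{P}$ is one-ended. Let $J_0\in\mathbb{J}$ be such that some induced subgraph of $J_0$ separates $\Gamma$. Then one can write $\Gamma=\Gamma_1\cup\Gamma_2$ such that: (1) $\Gamma_1$ and $\Gamma_2$ are both proper induced subgraphs of $\Gamma$; (2) $\Gamma_1\cap\Gamma_2$ is an induced subgraph of $J_0$; (3) each $J\in\mathbb{J}$ lies completely inside $\Gamma_1$ or inside $\Gamma_2$.
   Context: For a finite simplicial graph $\Gamma$, the right-angled Coxeter group $G_\Gamma$ has generators the vertices of $\Gamma$ and relations $s^2=1$ and $st=ts$ for adjacent $s,t$; $G_J$ is the subgroup generated by the vertices of an induced subgraph $J$. An induced subgraph separates $\Gamma$ if its complement in $\Gamma$ is disconnected. *)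

From mathcomp Require Import all_boot.
Set Implicit Arguments. Unset Strict Implicit. Unset Printing Implicit Defensive.

Section RACG.
Variables (T : finType) (e : rel T).

(* Induced subgraphs of Gamma are identified with their vertex sets. *)
Definition induced_rel (B : {set T}) : rel T :=
  [rel x y | [&& e x y, x \in B & y \in B]].

Definition separates (A : {set T}) : Prop :=
  exists x y, [/\ x \notin A, y \notin A & ~~ connect (induced_rel (~: A)) x y].

(* Equality in the right-angled Coxeter group G_Gamma, on words over T:
   the congruence generated by s s = 1 and s t = t s for adjacent s, t. *)
Inductive weq : seq T -> seq T -> Prop :=
| weq_refl u : weq u u
| weq_sym u v : weq u v -> weq v u
| weq_trans u v w : weq u v -> weq v w -> weq u w
| weq_cancel u v s : weq (u ++ s :: s :: v) (u ++ v)
| weq_comm u v s t : e s t -> weq (u ++ s :: t :: v) (u ++ t :: s :: v).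

Section Graph.
Variables (V : Type) (veq : V -> V -> Prop) (adj : V -> V -> Prop).

Inductive gpath : nat -> V -> V -> Prop :=
| gpath0 a b : veq a b -> gpath 0 a b
| gpathS n a b c : adj a b -> gpath n b c -> gpath n.+1 a c.

Definition is_dist (a b : V) (n : nat) : Prop :=
  gpath n a b /\ forall m, gpath m a b -> n <= m.

Definition gromov_hyperbolic : Prop :=
  exists delta : nat, forall a b c d dab dcd dac dbd dad dbc,
    is_dist a b dab -> is_dist c d dcd -> is_dist a c dac ->
    is_dist b d dbd -> is_dist a d dad -> is_dist b c dbc ->
    dab + dcd <= maxn (dac + dbd) (dad + dbc) + 2 * delta.
End Graph.

Section Ends.
Variable S : {set T}.

Definition Sword (w : seq T) : bool := all (mem S) w.

Definition avoids (K : seq (seq T)) (u : seq T) : Prop :=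
  forall k, k \in K -> ~ weq u k.

(* connectivity in the Cayley graph of G_S (gen. set S) minus the finite set K *)
Inductive connK (K : seq (seq T)) : seq T -> seq T -> Prop :=
| connK0 u v : avoids K u -> weq u v -> connK K u v
| connKS u s w : avoids K u -> s \in S -> connK K (u ++ [:: s]) w -> connK K u w.

Definition infinite_comp (K : seq (seq T)) (u : seq T) : Prop :=
  forall L : seq (seq T), exists v, [/\ Sword v, connK K u v &
    forall l, l \in L -> ~ weq v l].

Definition one_ended : Prop :=
  (exists u, Sword u /\ infinite_comp [::] u) /\
  forall K u v, Sword u -> Sword v -> infinite_comp K u -> infinite_comp K v ->
    connK K u v.
End Ends.

Section Cusped.
Variable P : {set {set T}}.

(* (x, None) : the vertex x of the Cayley graph of G_Gamma;
   (x, Some (J, n)) : the vertex (x, n+1) of the combinatorial horoball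
   over the coset x G_J. *)
Definition cvert := (seq T * option ({set T} * nat))%type.

Definition cveq (a b : cvert) : Prop := a.2 = b.2 /\ weq a.1 b.1.

Definition cadj0 (a b : cvert) : Prop :=
  match a.2, b.2 with
  | None, None => exists s, weq (a.1 ++ [:: s]) b.1
  | None, Some (J, 0) => J \in P /\ weq a.1 b.1
  | Some (J, n), Some (J', n') =>
      J \in P /\ J' = J /\
      ((n' = n.+1 /\ weq a.1 b.1) \/
       (n' = n /\ ~ weq a.1 b.1 /\
        exists w, [/\ all (mem J) w, size w <= 2 ^ n.+1 & weq (a.1 ++ w) b.1]))
  | _, _ => False
  end.

Definition cadj (a b : cvert) : Prop := cadj0 a b \/ cadj0 b a.

Definition rel_hyperbolic : Prop := gromov_hyperbolic cveq cadj.
End Cusped.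

End RACG.

From Stdlib Require Import ZArith Lia Classical.
From mathcomp Require Import all_boot zify.
Set Implicit Arguments. Unset Strict Implicit. Unset Printing Implicit Defensive.

(** Let [A] inside [J0] separate Gamma and let [C] be the component of
    [Gamma - A] containing a vertex outside [J0]; split Gamma as [C + A] and
    [(Gamma - C) + J0].  It remains to see that for every other [J] in the
    collection, [J - A] lies in a single component of [Gamma - A].

    First, [J] and [J0] meet in a clique.  Otherwise two non-adjacent vertices
    [s, t] of [J :&: J0] put [g = (st)^(2^m)], of length [2^(m+1)], into both
    peripheral subgroups.  In the cusped space [1] and [g] are more than [m]
    apart (the logarithm of the displacement of [g] in the dihedral quotient
    [<s, t>], minus the depth, is 1-Lipschitz), yet both lie within [m + 2] of
    the points at depth [m] over [1] in the two horoballs, which are [2m + 2]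
    apart; the four-point condition fails once [m > 2 delta].

    Hence [K := J :&: A] is a clique and [G_K] is finite.  If [K] separated
    [J], removing [G_K] from the Cayley graph of [G_J] would leave two
    infinite components: alternating words in two vertices on opposite sides
    go to infinity, and the side of a group element, read off the first letter
    outside [K] of its normal form, cannot change along a path avoiding [G_K].
    This contradicts the one-endedness of [G_J]. *)

Section Words.
Variables (T : finType) (e : rel T).
Local Notation weq := (weq e).

Lemma weq_catr u v w : weq u v -> weq (u ++ w) (v ++ w).
Proof.
elim=> {u v} [u | u v _ | u v x _ IH1 _ IH2 | u v s | u v s t est].
- exact: weq_refl.
- exact: weq_sym.
- exact: weq_trans IH2.
- by rewrite -!catA; apply: weq_cancel.
- by rewrite -!catA; apply: weq_comm.
Qed.

Lemma weq_past c u v r : all (e c) v -> weq (u ++ c :: v ++ r) (u ++ v ++ c :: r).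
Proof.
elim: v u => [|d v IH] u /=; first by move=> _; apply: weq_refl.
case/andP=> ecd /(IH (rcons u d)); rewrite -cats1 -!catA /=.
exact/weq_trans/weq_comm.
Qed.

Lemma weq_cancel_past c u v : all (e c) v -> weq (u ++ c :: v ++ [:: c]) (u ++ v).
Proof.
move=> /(weq_past u [:: c]) /weq_trans; apply.
by have := weq_cancel e (u ++ v) [::] c; rewrite cats0 -catA.
Qed.

Lemma weq_cat_rev u : weq (u ++ rev u) [::].
Proof.
elim/last_ind: u => [|u c IH]; first exact: weq_refl.
rewrite rev_rcons -cats1 -catA; exact: weq_trans (weq_cancel e u (rev u) c) IH.
Qed.

End Words.

(** * The infinite dihedral quotient *)

Fixpoint alt_word (T : Type) (a b : T) n : seq T :=
  if n is n'.+1 then a :: alt_word b a n' else [::].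

Lemma size_alt_word (T : Type) (a b : T) n : size (alt_word a b n) = n.
Proof. by elim: n a b => //= n IH a b; rewrite IH. Qed.

Lemma take_alt_word (T : Type) (a b : T) i n :
  take i (alt_word a b n) = alt_word a b (minn i n).
Proof. by elim: n i a b => [|n IH] [|i] a b //=; rewrite ?minn0 ?IH ?minnSS. Qed.

Lemma all_alt_word (T : Type) (J : pred T) (a b : T) n :
  J a -> J b -> all J (alt_word a b n).
Proof. by elim: n a b => //= n IH a b aJ bJ; rewrite aJ IH. Qed.

(* [(b, z)] stands for the isometry [x |-> (-1)^b x + z] of Z, and [dih_mul]
   is composition. *)
Definition dih := (bool * Z)%type.
Definition dih1 : dih := (false, 0%Z).
Definition dih_mul (f g : dih) : dih :=
  (f.1 (+) g.1, ((if f.1 then - g.2 else g.2) + f.2)%Z).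

Lemma dih_mul1l f : dih_mul dih1 f = f.
Proof. by case: f => b z; rewrite /dih_mul /=; f_equal; lia. Qed.

Lemma dih_mul1r f : dih_mul f dih1 = f.
Proof. by case: f => [[] z]; rewrite /dih_mul /=; f_equal; lia. Qed.

Lemma dih_mulA f g h : dih_mul f (dih_mul g h) = dih_mul (dih_mul f g) h.
Proof.
case: f g h => [b1 z1] [b2 z2] [b3 z3]; rewrite /dih_mul /=.
by case: b1; case: b2; case: b3 => /=; f_equal; lia.
Qed.

Section DihedralQuotient.
Variables (T : finType) (s t : T).

(* [s] and [t] act as the reflections of Z in [1/2] and [-1/2]; when they
   are not adjacent this factors through G_Gamma ([weq_dih_word]). *)
Definition dih_gen (c : T) : dih :=
  if c == s then (true, 1%Z) else if c == t then (true, (-1)%Z) else dih1.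

Definition dih_word (w : seq T) : dih := foldr (dih_mul \o dih_gen) dih1 w.

Definition dih_shift (w : seq T) : Z := (dih_word w).2.

Lemma dih_word_cat u v : dih_word (u ++ v) = dih_mul (dih_word u) (dih_word v).
Proof. by elim: u => [|c u IH] /=; rewrite ?dih_mul1l // IH dih_mulA. Qed.

Lemma dih_genK c : dih_mul (dih_gen c) (dih_gen c) = dih1.
Proof. by rewrite /dih_gen; case: (c == s); last case: (c == t). Qed.

Lemma dih_word_notin w : s \notin w -> t \notin w -> dih_word w = dih1.
Proof.
elim: w => //= c w IH; rewrite !in_cons !negb_or => /andP [cs sw] /andP [ct tw].
by rewrite IH // /dih_gen eq_sym (negbTE cs) eq_sym (negbTE ct) dih_mul1l.
Qed.

Lemma dih_shift_size w : (Z.abs (dih_shift w) <= Z.of_nat (size w))%Z.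
Proof.
elim: w => [|c w IH] /=; first by rewrite /dih_shift /=; lia.
move: IH; rewrite /dih_shift /= /dih_mul /dih_gen.
by case: (c == s); last case: (c == t); case: (dih_word w).1 => /=; lia.
Qed.

Lemma dih_shift_cat u w :
  (Z.abs (dih_shift (u ++ w) - dih_shift u) <= Z.of_nat (size w))%Z.
Proof.
have := @dih_shift_size w; rewrite /dih_shift dih_word_cat /dih_mul /=.
by case: (dih_word u).1; lia.
Qed.

Lemma dih_word_alt_word n : s != t ->
  dih_word (alt_word s t n) = (odd n, Z.of_nat n) /\
  dih_word (alt_word t s n) = (odd n, (- Z.of_nat n)%Z).
Proof.
move=> st; elim: n => [|n [IHst IHts]] //=.
rewrite IHst IHts /dih_gen eqxx eq_sym (negbTE st) eqxx /dih_mul /=.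
by split; f_equal; lia.
Qed.

Variable e : rel T.
Hypotheses (e_sym : symmetric e) (nst : ~~ e s t).

Lemma dih_gen_comm c d : e c d ->
  dih_mul (dih_gen c) (dih_gen d) = dih_mul (dih_gen d) (dih_gen c).
Proof.
move=> ecd; have [<-|cd] := eqVneq c d; first by [].
suff [->|->] : dih_gen c = dih1 \/ dih_gen d = dih1 by rewrite dih_mul1l dih_mul1r.
rewrite /dih_gen; case: (eqVneq c s) => [cs|_]; case: (eqVneq c t) => [ct|_];
  case: (eqVneq d s) => [ds|_]; case: (eqVneq d t) => [dt|_]; auto; subst;
  by move: nst cd ecd; rewrite ?eqxx // e_sym => /negbTE ->.
Qed.

Lemma weq_dih_word u v : weq e u v -> dih_word u = dih_word v.
Proof.
elim=> {u v} [u | u v _ -> | u v w _ -> _ -> | u v c | u v c d ecd] //;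
  rewrite !dih_word_cat /= !(dih_mulA (dih_gen c)).
- by rewrite dih_genK dih_mul1l.
- by rewrite dih_gen_comm // -dih_mulA.
Qed.

End DihedralQuotient.

(** * Heaps and normal forms *)

Section Heaps.
Variables (T : finType) (e : rel T).
Hypotheses (e_sym : symmetric e) (e_irr : irreflexive e).
Local Notation weq := (weq e).

Inductive commeq : seq T -> seq T -> Prop :=
| commeq_refl u : commeq u u
| commeq_trans u v w : commeq u v -> commeq v w -> commeq u w
| commeq_swap u v p q : e p q -> commeq (u ++ p :: q :: v) (u ++ q :: p :: v).

Lemma commeq_sym u v : commeq u v -> commeq v u.
Proof.
elim=> {u v} [u | u v w _ IH1 _ IH2 | u v p q epq].
- exact: commeq_refl.
- exact: commeq_trans IH2 IH1.
- by apply: commeq_swap; rewrite e_sym.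
Qed.

Lemma commeq_catr u v w : commeq u v -> commeq (u ++ w) (v ++ w).
Proof.
elim=> {u v} [u | u v x _ IH1 _ IH2 | u v p q epq].
- exact: commeq_refl.
- exact: commeq_trans IH2.
- by rewrite -!catA; apply: commeq_swap.
Qed.

Lemma commeq_perm u v : commeq u v -> perm_eq u v.
Proof.
elim=> {u v} [u | u v x _ IH1 _ IH2 | u v p q _].
- exact: perm_refl.
- exact: perm_trans IH2.
- by rewrite perm_cat2l -(cat1s p) -(cat1s q) perm_catCA.
Qed.

Lemma commeq_past c u v r : all (e c) v ->
  commeq (u ++ c :: v ++ r) (u ++ v ++ c :: r).
Proof.
elim: v u => [|d v IH] u /=; first by move=> _; apply: commeq_refl.
case/andP=> ecd /(IH (rcons u d)); rewrite -cats1 -!catA /=.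
exact/commeq_trans/commeq_swap.
Qed.

(* Cartier-Foata heaps: column [v] stacks, most recent first, one entry for
   each letter not commuting with [v]; the entry is [true] iff the letter is
   [v] itself.  [hmul] multiplies on the right by a generator, cancelling the
   letter if its own column has it on top. *)
Definition heap := {ffun T -> seq bool}.
Definition heap0 : heap := [ffun => [::]].
Definition hpush (s : T) (H : heap) : heap :=
  [ffun v => if e s v then H v else (v == s) :: H v].
Definition hpop (s : T) (H : heap) : heap :=
  [ffun v => if e s v then H v else behead (H v)].
Definition htop (s : T) (H : heap) : bool := head false (H s).
Definition hmul (s : T) (H : heap) : heap :=
  if htop s H then hpop s H else hpush s H.

Definition heap_of (w : seq T) : heap := foldl (fun H c => hpush c H) heap0 w.
Definition heap_red (w : seq T) : heap := foldl (fun H c => hmul c H) heap0 w.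

Lemma heap_of_rcons w c : heap_of (rcons w c) = hpush c (heap_of w).
Proof. by rewrite /heap_of -cats1 foldl_cat. Qed.

Lemma heap_red_rcons w c : heap_red (rcons w c) = hmul c (heap_red w).
Proof. by rewrite /heap_red -cats1 foldl_cat. Qed.

Lemma heap_red_cat u v : heap_red (u ++ v) = foldl (fun H c => hmul c H) (heap_red u) v.
Proof. by rewrite /heap_red foldl_cat. Qed.

Lemma hpush_comm p q H : e p q -> hpush p (hpush q H) = hpush q (hpush p H).
Proof.
move=> epq; apply/ffunP => v; rewrite !ffunE.
case: (boolP (e p v)) => epv; case: (boolP (e q v)) => eqv //.
have vp : v != p by apply: contraNneq eqv => ->; rewrite e_sym.
have vq : v != q by apply: contraNneq epv => ->.
by rewrite (negbTE vp) (negbTE vq).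
Qed.

Lemma hpushK s : cancel (hpush s) (hpop s).
Proof. by move=> H; apply/ffunP => v; rewrite !ffunE; case: (e s v). Qed.

Lemma htop_push s c H : htop s (hpush c H) = if e c s then htop s H else s == c.
Proof. by rewrite /htop ffunE; case: (e c s). Qed.

Lemma hpop_comm s t H : hpop s (hpop t H) = hpop t (hpop s H).
Proof. by apply/ffunP => v; rewrite !ffunE; case: (e s v); case: (e t v). Qed.

Lemma commeq_heap_of u v : commeq u v -> heap_of u = heap_of v.
Proof.
elim=> {u v} // [u v w _ -> _ -> // | u v p q epq].
by rewrite /heap_of !foldl_cat /= hpush_comm // e_sym.
Qed.

Lemma notin_all_adj s w : all (e s) w -> s \notin w.
Proof. by move=> h; apply/negP => /(allP h); rewrite e_irr. Qed.

Lemma heap_of_past s w1 w2 : all (e s) w2 ->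
  heap_of (w1 ++ s :: w2) = hpush s (heap_of (w1 ++ w2)).
Proof.
move=> /(commeq_past w1 [::]) /commeq_heap_of; rewrite !cats0 => ->.
by rewrite catA cats1 heap_of_rcons.
Qed.

Lemma htop_heap_of s w : htop s (heap_of w) ->
  exists w1 w2, w = w1 ++ s :: w2 /\ all (e s) w2.
Proof.
elim/last_ind: w => [|w c IH]; first by rewrite /htop /heap_of /= ffunE.
rewrite heap_of_rcons htop_push; case: (boolP (e c s)) => ecs.
  move/IH => [w1 [w2 [-> h]]]; exists w1, (rcons w2 c).
  by rewrite rcons_cat all_rcons e_sym ecs.
by move/eqP=> ->; exists w, [::]; rewrite cats1.
Qed.

Lemma heap_of_inj u v : heap_of u = heap_of v -> commeq u v.
Proof.
elim/last_ind: u v => [|u c IH] v.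
  case/lastP: v => [|v c]; first by move=> _; apply: commeq_refl.
  move/(congr1 (fun H : heap => H c)).
  by rewrite heap_of_rcons /hpush /heap_of /= !ffunE e_irr eqxx.
move=> E; have : htop c (heap_of v) by rewrite -E heap_of_rcons htop_push e_irr eqxx.
case/htop_heap_of => [w1 [w2 [Ev h]]].
move: E; rewrite Ev heap_of_past // heap_of_rcons => /(congr1 (hpop c)).
rewrite !hpushK -cats1 => /IH /(commeq_catr [:: c]) /commeq_trans; apply.
rewrite -catA; apply: commeq_sym; have := commeq_past w1 [::] h; by rewrite cats0.
Qed.

Fixpoint no_true_pair (l : seq bool) : bool :=
  if l is b :: l' then ~~ (b && head false l') && no_true_pair l' else true.

Lemma heap_red_no_true_pair w v : no_true_pair (heap_red w v).
Proof.
elim/last_ind: w v => [|w c IH] v; first by rewrite /heap_red /= ffunE.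
rewrite heap_red_rcons /hmul /htop; case: ifP => h; rewrite !ffunE;
  case: (e c v) => //.
  by move: (IH v); case: (heap_red w v) => [|b l] //= /andP [].
case: eqP => [->|_] /=; first by rewrite h IH.
by rewrite IH.
Qed.

Definition reduced_heap (H : heap) :=
  (exists r, H = heap_of r) /\ forall v, no_true_pair (H v).

Lemma hmulK s H : reduced_heap H -> hmul s (hmul s H) = H.
Proof.
case=> [[r ->] ntp]; rewrite /hmul.
case: (boolP (htop s (heap_of r))) => [top_s|ntop]; last first.
  by rewrite htop_push e_irr eqxx hpushK.
have [w1 [w2 [Er h]]] := htop_heap_of top_s.
have ntop : htop s (hpop s (heap_of r)) = false.
  move: (ntp s); rewrite Er heap_of_past // hpushK /htop /hpush ffunE e_irr eqxx.
  by case: (heap_of _ s) => [|[]].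
by rewrite ntop Er heap_of_past // hpushK.
Qed.

Lemma htop_push_adj s t H : e t s -> htop s (hpush t H) = htop s H.
Proof. by move=> ets; rewrite htop_push ets. Qed.

Lemma htop_pop_adj s t H : e t s -> htop s (hpop t H) = htop s H.
Proof. by move=> ets; rewrite /htop ffunE ets. Qed.

Lemma hpop_push_comm s t H : reduced_heap H -> e s t -> htop s H ->
  hpop s (hpush t H) = hpush t (hpop s H).
Proof.
case=> [[r ->] _] est /htop_heap_of [w1 [w2 [-> h]]].
apply/ffunP => v; rewrite heap_of_past // !ffunE.
case: (boolP (e s v)) => esv; case: (boolP (e t v)) => etv //.
have vs : v != s by apply: contraNneq etv => ->; rewrite e_sym.
have vt : v != t by apply: contraNneq esv => ->.
by rewrite (negbTE vs) (negbTE vt).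
Qed.

Lemma hmul_comm s t H : reduced_heap H -> e s t ->
  hmul s (hmul t H) = hmul t (hmul s H).
Proof.
move=> redH est; have ets : e t s by rewrite e_sym.
rewrite /hmul; case: (boolP (htop t H)) => ht; case: (boolP (htop s H)) => hs.
- by rewrite !htop_pop_adj // hs ht hpop_comm.
- by rewrite htop_pop_adj // (negbTE hs) htop_push_adj // ht hpop_push_comm.
- by rewrite htop_push_adj // hs htop_pop_adj // (negbTE ht) hpop_push_comm.
- by rewrite !htop_push_adj // (negbTE hs) (negbTE ht) hpush_comm.
Qed.

Definition remlast (s : T) (r : seq T) : seq T := rev (rem s (rev r)).

Lemma rem_cat_notin (s : T) (u v : seq T) : s \notin u -> rem s (u ++ s :: v) = u ++ v.
Proof.
elim: u => [|a u IH] /=; first by rewrite eqxx.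
by rewrite in_cons negb_or eq_sym => /andP [/negbTE -> /IH ->].
Qed.

Lemma remlast_cat s w1 w2 : s \notin w2 -> remlast s (w1 ++ s :: w2) = w1 ++ w2.
Proof.
move=> sw2; rewrite /remlast rev_cat rev_cons -cats1 -catA /=.
by rewrite rem_cat_notin ?mem_rev // rev_cat !revK.
Qed.

Definition nf_step (r : seq T) (s : T) : seq T :=
  if htop s (heap_of r) then remlast s r else rcons r s.

Definition nf (w : seq T) : seq T := foldl nf_step [::] w.

Lemma nf_rcons w c : nf (rcons w c) = nf_step (nf w) c.
Proof. by rewrite /nf -cats1 foldl_cat. Qed.

Lemma nf_rcons_cases u s : nf (rcons u s) = rcons (nf u) s \/
  exists w1 w2, [/\ nf u = w1 ++ s :: w2, all (e s) w2 & nf (rcons u s) = w1 ++ w2].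
Proof.
rewrite nf_rcons /nf_step; case: ifP => [/htop_heap_of [w1 [w2 [E h]]] | _].
  by right; exists w1, w2; rewrite E remlast_cat ?notin_all_adj.
by left.
Qed.

Lemma nf1 z : nf [:: z] = [:: z].
Proof. by rewrite /nf /= /nf_step /htop /heap_of /= ffunE. Qed.

Lemma nf_sub w : {subset nf w <= w}.
Proof.
elim/last_ind: w => [|w c IH] // x.
have [-> | [w1 [w2 [E _ ->]]]] := nf_rcons_cases w c; rewrite mem_rcons in_cons.
  by rewrite mem_rcons in_cons => /orP [->|/IH ->]; rewrite ?orbT.
move=> x12; rewrite IH ?orbT // E; move: x12.
by rewrite !mem_cat in_cons => /orP [->|->]; rewrite ?orbT.
Qed.

Lemma weq_nf w : weq w (nf w).
Proof.
elim/last_ind: w => [|w c IH]; first exact: weq_refl.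
rewrite -cats1; apply: weq_trans (weq_catr [:: c] IH) _; rewrite !cats1.
have [->|[w1 [w2 [-> h ->]]]] := nf_rcons_cases w c.
  by rewrite -cats1; apply: weq_refl.
by rewrite -cats1 -catA; apply: weq_cancel_past.
Qed.

Lemma heap_red_nf w : heap_red w = heap_of (nf w).
Proof.
elim/last_ind: w => [|w c IH] //; rewrite heap_red_rcons nf_rcons IH /hmul /nf_step.
case: ifP => [/htop_heap_of [w1 [w2 [-> h]]] | _]; last by rewrite heap_of_rcons.
by rewrite remlast_cat ?notin_all_adj // heap_of_past // hpushK.
Qed.

Lemma reduced_heap_red w : reduced_heap (heap_red w).
Proof.
by split=> [|v]; [exists (nf w); apply: heap_red_nf | apply: heap_red_no_true_pair].
Qed.

Lemma weq_heap_red u v : weq u v -> heap_red u = heap_red v.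
Proof.
elim=> {u v} [//| u v _ -> // | u v w _ -> _ -> // | u v s | u v s t est];
  rewrite !heap_red_cat /=.
- by rewrite hmulK //; apply: reduced_heap_red.
- by rewrite hmul_comm 1?e_sym //; apply: reduced_heap_red.
Qed.

Lemma weq_nf_commeq u v : weq u v -> commeq (nf u) (nf v).
Proof. by move/weq_heap_red; rewrite !heap_red_nf; apply: heap_of_inj. Qed.

End Heaps.

Section InducedSubgraphs.
Variables (T : finType) (e : rel T).
Hypothesis e_sym : symmetric e.

Definition component (B : {set T}) (z : T) : {set T} :=
  [set v | connect (induced_rel e B) z v].

Lemma induced_rel_sym (B : {set T}) : symmetric (induced_rel e B).
Proof. by move=> x y; rewrite /induced_rel /= e_sym [(x \in _) && _]andbC. Qed.

Lemma connect_induced_subset (B B' : {set T}) x y : B \subset B' ->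
  connect (induced_rel e B) x y -> connect (induced_rel e B') x y.
Proof.
move=> BB'; apply: connect_sub => u v /and3P [uv uB vB]; apply: connect1.
by rewrite /induced_rel /= uv !(subsetP BB').
Qed.

Lemma connect_induced_mem (B : {set T}) x y :
  connect (induced_rel e B) x y -> x \in B -> y \in B.
Proof.
case/connectP => p + ->; elim: p x => //= u p IH x /andP [/and3P [_ _ uB] pu] _.
exact: IH pu uB.
Qed.

Lemma component_edge_eq (B : {set T}) z u v : u \in B -> v \in B -> e u v ->
  (u \in component B z) = (v \in component B z).
Proof.
move=> uB vB uv; have Ruv : induced_rel e B u v by rewrite /induced_rel /= uv uB vB.
have Rvu : induced_rel e B v u by rewrite induced_rel_sym.
by rewrite !inE; apply/idP/idP => /connect_trans; apply; apply: connect1.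
Qed.

End InducedSubgraphs.

(** * Clique separators and ends *)

Section CliqueSeparator.
Variables (T : finType) (e : rel T).
Hypotheses (e_sym : symmetric e) (e_irr : irreflexive e).
Local Notation weq := (weq e).
Local Notation nf := (nf e).

Lemma connK_extend (S : {set T}) F u r : all (mem S) r ->
  (forall i, i <= size r -> avoids e F (u ++ take i r)) -> connK e S F u (u ++ r).
Proof.
elim: r u => [|c r IH] u /=.
  by move=> _ /(_ 0 isT); rewrite !cats0 => Fu; apply: connK0 Fu (weq_refl _ _).
case/andP=> cS rS Fr; apply: connKS cS _; first by have := Fr 0 isT; rewrite cats0.
have -> : u ++ c :: r = (u ++ [:: c]) ++ r by rewrite -catA.
apply: IH rS _ => i ri.
by rewrite -catA cat1s; apply: (Fr i.+1).
Qed.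

(* Alternating words [a b a ...] go to infinity in the dihedral quotient. *)
Lemma infinite_comp_alt_word (S : {set T}) F a b :
  a \in S -> b \in S -> a != b -> ~~ e a b ->
  {in F, forall f, dih_word a b f = dih1} -> infinite_comp e S F [:: a].
Proof.
move=> aS bS ab nab F1 L; pose n := \max_(l <- L) size l.
have dih_ab k : dih_word a b (alt_word a b k) = (odd k, Z.of_nat k).
  by case: (dih_word_alt_word k ab).
exists (alt_word a b n.+1); split; first exact: all_alt_word.
  apply: (connK_extend (u := [:: a])); first exact: all_alt_word.
  move=> i _ f /F1 f1 /(weq_dih_word e_sym nab).
  by rewrite f1 cat1s take_alt_word -/(alt_word a b _.+1) dih_ab; case.
move=> l lL /(weq_dih_word e_sym nab) /(congr1 snd) E.
have : (Z.of_nat n.+1 <= Z.of_nat (size l))%Z.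
  have := @dih_shift_size _ a b l; rewrite /dih_shift -E dih_ab; cbn [snd].
  by rewrite Z.abs_eq //; apply: Zle_0_nat.
by move/Nat2Z.inj_le/leP; rewrite ltnNge (leq_bigmax_seq l lL isT).
Qed.

Variable K : {set T}.
Hypothesis K_clique : {in K &, forall p q, p != q -> e p q}.

Fixpoint kwords n : seq (seq T) :=
  [::] :: (if n is n'.+1 then [seq c :: w | c <- enum K, w <- kwords n'] else [::]).

Lemma kwords_mem n w : all (mem K) w -> size w <= n -> w \in kwords n.
Proof.
elim: n w => [|n IH] [|c w] //= /andP [cK wK] sw; rewrite in_cons /=.
by apply: (allpairs_f (fun c w => c :: w)); rewrite ?mem_enum //; apply: IH.
Qed.

Lemma all_kwords n w : w \in kwords n -> all (mem K) w.
Proof.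
elim: n w => [|n IH] w /=; rewrite in_cons => /orP [/eqP -> // | ] //.
by case/allpairsP => [[c w'] /= [cK /IH w'K ->]] /=; rewrite -mem_enum cK.
Qed.

Lemma clique_word_uniq w : all (mem K) w ->
  exists w', [/\ uniq w', all (mem K) w' & weq w w'].
Proof.
elim/last_ind: w => [|w c IH]; first by exists [::]; split=> //; apply: weq_refl.
rewrite all_rcons => /andP [cK /IH [w' [uw' w'K ww']]].
have wcw' : weq (rcons w c) (w' ++ [:: c]) by rewrite -cats1; apply: weq_catr.
case: (boolP (c \in w')) => cw'; last first.
  by exists (rcons w' c); rewrite rcons_uniq cw' uw' all_rcons cK w'K -[rcons w' c]cats1.
case/splitPr: cw' uw' w'K wcw' => w1 w2; rewrite cat_uniq all_cat /= !negb_or.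
case/and3P => u1 /andP [_ w1w2] /andP [cw2 u2]; case/and3P => w1K _ w2K wcw'.
exists (w1 ++ w2); split; first by rewrite cat_uniq u1 u2 w1w2.
  by rewrite all_cat w1K w2K.
apply: weq_trans wcw' _; rewrite -catA; apply: weq_cancel_past.
apply/allP => q qw2; apply: K_clique => //; first by apply/(allP w2K).
by apply: contraNneq cw2 => ->.
Qed.

Definition clique_words : seq (seq T) := kwords #|K|.

Lemma weq_clique_words w : all (mem K) w -> exists2 f, f \in clique_words & weq w f.
Proof.
case/clique_word_uniq => w' [uw' w'K ww']; exists w' => //.
apply: kwords_mem => //; rewrite -(card_uniqP uw'); apply/subset_leq_card.
by apply/subsetP => z /(allP w'K).
Qed.

Lemma avoids_nf_notin u : avoids e clique_words u -> has (fun c => c \notin K) (nf u).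
Proof.
move=> Fu; apply: contraT; rewrite -all_predC => /allP nfK.
have [|f fF nff] := @weq_clique_words (nf u).
  by apply/allP => z /nfK /negbNE.
by case: (Fu f fF); apply: weq_trans (weq_nf e_sym e_irr u) nff.
Qed.

Variables (J C : {set T}).
Hypothesis C_side : {in J :\: K &, forall p q, e p q -> (p \in C) = (q \in C)}.

Definition side_of (w : seq T) : bool :=
  if [seq c <- w | c \notin K] is c :: _ then c \in C else false.

Lemma side_of_commeq u v : commeq e u v -> all (mem J) u -> side_of u = side_of v.
Proof.
elim=> {u v} [// | u v w uv IH1 _ IH2 uJ | u v p q epq].
  by rewrite IH1 // IH2 // -(perm_all _ (commeq_perm uv)).
rewrite all_cat /= => /and3P [_ pJ /andP [qJ _]].
rewrite /side_of !filter_cat; case: [seq c <- u | c \notin K] => [|c l] //=.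
case: (boolP (p \in K)) => pK; case: (boolP (q \in K)) => qK //=.
by apply: C_side; rewrite // inE ?pK ?qK.
Qed.

Lemma side_of_rcons r s : has (fun c => c \notin K) r -> side_of (rcons r s) = side_of r.
Proof.
rewrite has_filter /side_of filter_rcons.
by case: [seq c <- r | c \notin K] => [|c l] //= _; case: (s \notin K).
Qed.

Lemma all_nf (S : {set T}) u : all (mem S) u -> all (mem S) (nf u).
Proof. by move/allP=> uS; apply/allP => z /(nf_sub e_sym e_irr) /uS. Qed.

Lemma side_of_step u s : all (mem J) u ->
  avoids e clique_words u -> avoids e clique_words (u ++ [:: s]) ->
  side_of (nf (u ++ [:: s])) = side_of (nf u).
Proof.
move=> uJ /avoids_nf_notin Ku /avoids_nf_notin; rewrite cats1.
have [-> | [w1 [w2 [E h ->]]]] := nf_rcons_cases e_sym e_irr u s.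
  by rewrite side_of_rcons.
move=> Kw; rewrite E -(side_of_rcons s Kw); apply/esym/side_of_commeq.
  by have := commeq_past w1 [::] h; rewrite cats0 -cats1 -catA.
by rewrite -E all_nf.
Qed.

Lemma connK_side_of u v : connK e J clique_words u v -> all (mem J) u ->
  side_of (nf u) = side_of (nf v).
Proof.
elim=> {u v} [u v _ uv uJ | u s w Fu sJ cw IH uJ].
  by apply: side_of_commeq; [apply: weq_nf_commeq | apply: all_nf].
have usJ : all (mem J) (u ++ [:: s]) by rewrite all_cat uJ /= sJ.
rewrite -IH // side_of_step //; by case: cw.
Qed.

Lemma dih_word_clique_words a b : a \notin K -> b \notin K ->
  {in clique_words, forall f, dih_word a b f = dih1}.
Proof.
move=> aK bK f /all_kwords /allP fK.
by apply: dih_word_notin; [apply: contra aK | apply: contra bK]; apply: fK.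
Qed.

Lemma clique_separator_not_one_ended x y : x \in J :\: K -> y \in J :\: K ->
  x \in C -> y \notin C -> ~ one_ended e J.
Proof.
rewrite !inE => /andP [xK xJ] /andP [yK yJ] xC yC.
have xy : x != y by apply: contraTneq xC => ->.
have nxy : ~~ e x y.
  by apply: contra yC => /(C_side _ _) <-; rewrite ?inE ?xK ?yK ?xJ ?yJ.
have yx : y != x by rewrite eq_sym.
have nyx : ~~ e y x by rewrite e_sym.
have infx := infinite_comp_alt_word xJ yJ xy nxy (dih_word_clique_words xK yK).
have infy := infinite_comp_alt_word yJ xJ yx nyx (dih_word_clique_words yK xK).
case=> _ /(_ clique_words [:: x] [:: y]); rewrite /Sword /= xJ yJ.
move=> /(_ isT isT infx infy) /connK_side_of; rewrite /= xJ !nf1 /side_of /= xK yK xC.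
by rewrite (negbTE yC) => /(_ isT).
Qed.

End CliqueSeparator.

Theorem one_ended_clique_connected (T : finType) (e : rel T) (J K : {set T}) :
  symmetric e -> irreflexive e -> one_ended e J ->
  {in K &, forall p q, p != q -> e p q} ->
  {in J :\: K &, forall x y, connect (induced_rel e (J :\: K)) x y}.
Proof.
move=> e_sym e_irr oneJ K_clique x y xJK yJK; apply: contraT => nxy; exfalso.
apply: (clique_separator_not_one_ended e_sym e_irr K_clique
          (C := component e (J :\: K) x) _ xJK yJK _ _ oneJ).
- by move=> p q pJK qJK; apply: component_edge_eq.
- by rewrite inE connect0.
- by rewrite inE.
Qed.

(** * The cusped space *)

Lemma trunc_log2_subn_le p q h : q <= p + 2 ^ h ->
  trunc_log 2 q - h <= trunc_log 2 p - h + 1.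
Proof.
move=> qp; have [->|q_gt0] := posnP q; first by rewrite trunc_log0.
have := trunc_logP (ltnSn 1) q_gt0; have := @trunc_log_ltn 2 p isT.
set k := trunc_log 2 q; set l := trunc_log 2 p => pl qk.
have [|hk] := leqP k (maxn l.+1 h); first lia.
have [k' Ek] : exists k', k = k'.+2 by exists k.-2; lia.
have lk' : 2 ^ l.+1 <= 2 ^ k'.+1 by apply: leq_pexp2l => //; lia.
have hk' : 2 ^ h <= 2 ^ k'.+1 by apply: leq_pexp2l => //; lia.
move: qk; rewrite Ek expnS; lia.
Qed.

Section CuspedSpace.
Variables (T : finType) (e : rel T) (P : {set {set T}}).
Hypothesis e_sym : symmetric e.
Local Notation weq := (weq e).
Local Notation veq := (cveq e).
Local Notation adj := (cadj e P).
Local Notation path := (gpath veq adj).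

Lemma cveq_refl a : veq a a.
Proof. by split => //; apply: weq_refl. Qed.

Lemma cveq_sym a b : veq a b -> veq b a.
Proof. by case=> h1 h2; split; [rewrite h1 | apply: weq_sym]. Qed.

Lemma cveq_trans a b c : veq a b -> veq b c -> veq a c.
Proof. by case=> h1 h2 [h3 h4]; split; [rewrite h1 | apply: weq_trans h4]. Qed.

Lemma cadj0_cveql a a' b : veq a a' -> cadj0 e P a b -> cadj0 e P a' b.
Proof.
case: a a' => [u o] [u' o'] [/= <- uu]; have u'u := weq_sym uu.
rewrite /cadj0 /=; case: o => [[J n]|]; case: b => [v [[J' n']|]] //=.
- case=> JP [EJ [[En uv]|[En [nuv [w [wJ ws uwv]]]]]]; do 2 split => //.
    by left; split => //; apply: weq_trans u'u uv.
  right; split; [done | split; first by move=> u'v; apply/nuv/weq_trans/u'v].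
  by exists w; split => //; apply: weq_trans (weq_catr w u'u) uwv.
- by case: n' => // [[JP uv]]; split => //; apply: weq_trans u'u uv.
- by case=> c uv; exists c; apply: weq_trans (weq_catr _ u'u) uv.
Qed.

Lemma cadj0_cveqr a b b' : veq b b' -> cadj0 e P a b -> cadj0 e P a b'.
Proof.
case: b b' => [v o] [v' o'] [/= <- vv].
rewrite /cadj0 /=; case: o => [[J n]|]; case: a => [u [[J' n']|]] //=.
- case=> JP [EJ [[En uv]|[En [nuv [w [wJ ws uwv]]]]]]; do 2 split => //.
    by left; split => //; apply: weq_trans uv vv.
  right; split; [done | split; first by move=> uv'; apply/nuv/weq_trans/(weq_sym vv)].
  by exists w; split => //; apply: weq_trans uwv vv.
- by case: n => // [[JP uv]]; split => //; apply: weq_trans uv vv.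
- by case=> c uv; exists c; apply: weq_trans uv vv.
Qed.

Lemma cadj_sym a b : adj a b -> adj b a.
Proof. by case=> H; [right | left]. Qed.

Lemma cadj_cveql a a' b : veq a a' -> adj a b -> adj a' b.
Proof.
by move=> aa' [H|H]; [left; apply: cadj0_cveql aa' H | right; apply: cadj0_cveqr aa' H].
Qed.

Lemma gpath_cveql n a a' b : veq a a' -> path n a b -> path n a' b.
Proof.
move=> + pab; case: pab => {n a b} [a b ab | n a c b ac cb] aa'.
  by apply: gpath0; apply: cveq_trans (cveq_sym aa') ab.
by apply: gpathS cb; apply: cadj_cveql aa' ac.
Qed.

Lemma gpath_cat n m a b c : path n a b -> path m b c -> path (n + m) a c.
Proof.
elim=> {n a b} [a b ab | n a b d ab _ IH] H.
  by apply: gpath_cveql H; apply: cveq_sym.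
by rewrite addSn; apply: gpathS ab (IH H).
Qed.

Lemma gpath_rev n a b : path n a b -> path n b a.
Proof.
elim=> {n a b} [a b ab | n a b c ab _ IH].
  by apply: gpath0; apply: cveq_sym.
rewrite -addn1; apply: gpath_cat IH _.
exact: gpathS (cadj_sym ab) (gpath0 adj (cveq_refl a)).
Qed.

Lemma exists_dist n a b : path n a b -> exists d, is_dist veq adj a b d.
Proof.
move=> pab; have [|d [[pd dmin] _]] :=
  dec_inh_nat_subset_has_unique_least_element _ (fun k => classic (path k a b)).
  by exists n.
by exists d; split=> // m /dmin /leP.
Qed.

Definition depth (v : cvert T) : nat := if v.2 is Some (_, n) then n.+1 else 0.
Definition horoball (v : cvert T) : option {set T} := omap fst v.2.

Lemma cadj0_depth a b : cadj0 e P a b ->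
  [/\ depth a <= depth b + 1, depth b <= depth a + 1 &
      horoball a != horoball b -> depth a + depth b = 1].
Proof.
rewrite /cadj0 /depth /horoball; case: a => [u [[J n]|]]; case: b => [v [[J' n']|]] //=.
- by case=> _ [-> [[-> _]|[-> _]]]; rewrite eqxx; split; lia.
- by case: n'.
Qed.

Lemma cadj_depth a b : adj a b ->
  [/\ depth a <= depth b + 1, depth b <= depth a + 1 &
      horoball a != horoball b -> depth a + depth b = 1].
Proof.
case=> /cadj0_depth [h1 h2 h3]; split => //.
by rewrite eq_sym addnC => /h3.
Qed.

(* Distinct horoballs only meet through the Cayley graph, at depth 0. *)
Lemma gpath_depth n a b : path n a b ->
  [/\ depth b <= depth a + n, depth a <= depth b + n &
      horoball a != horoball b -> depth a + depth b <= n].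
Proof.
elim=> {n a b} [a b [ab _] | n a b c /cadj_depth [h1 h2 h3] _ [i1 i2 i3]].
  by rewrite /depth /horoball ab eqxx; split; lia.
split; [lia | lia | move=> ac].
case: (eqVneq (horoball a) (horoball b)) => [Eab|/h3]; last lia.
by have := i3; rewrite -Eab => /(_ ac); lia.
Qed.

Lemma gpath_cayley u r : path (size r) (u, None) (u ++ r, None).
Proof.
elim: r u => [|c r IH] u /=; first by rewrite cats0; apply: gpath0; apply: cveq_refl.
apply: (@gpathS _ _ _ _ _ (u ++ [:: c], None)); first by left; exists c; apply: weq_refl.
by have := IH (u ++ [:: c]); rewrite -catA.
Qed.

Lemma gpath_descend u J i n : J \in P ->
  path i (u, Some (J, n)) (u, Some (J, n + i)).
Proof.
move=> JP; elim: i n => [|i IH] n.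
  by rewrite addn0; apply: gpath0; apply: cveq_refl.
apply: (@gpathS _ _ _ _ _ (u, Some (J, n.+1))).
  by left; do 2 split => //; left; split => //; apply: weq_refl.
by rewrite addnS -addSn; apply: IH.
Qed.

Lemma gpath_horoball u J n : J \in P -> path n.+1 (u, None) (u, Some (J, n)).
Proof.
move=> JP; apply: (@gpathS _ _ _ _ _ (u, Some (J, 0))).
  by left; split => //; apply: weq_refl.
exact: gpath_descend.
Qed.

Section LogShift.
Variables (s t : T).
Hypothesis nst : ~~ e s t.

Definition shift_size (u : seq T) : nat := Z.to_nat (Z.abs (dih_shift s t u)).

(* [log_excess] is 1-Lipschitz: a horizontal edge at depth [n] changes
   [shift_size] by at most [2 ^ n], hence its logarithm by at most one. *)
Definition log_excess (v : cvert T) : nat := trunc_log 2 (shift_size v.1) - depth v.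

Lemma shift_size_weq u v : weq u v -> shift_size u = shift_size v.
Proof. by move=> uv; rewrite /shift_size /dih_shift (weq_dih_word e_sym nst uv). Qed.

Lemma shift_size_cat u w v : weq (u ++ w) v ->
  shift_size v <= shift_size u + size w /\ shift_size u <= shift_size v + size w.
Proof.
move/shift_size_weq <-; rewrite /shift_size.
by have := @dih_shift_cat _ s t u w; lia.
Qed.

Lemma cadj0_log_excess a b : cadj0 e P a b ->
  log_excess b <= log_excess a + 1 /\ log_excess a <= log_excess b + 1.
Proof.
rewrite /cadj0 /log_excess /depth; case: a => [u [[J n]|]]; case: b => [v [[J' n']|]] //=.
- case=> _ [_ [[-> /shift_size_weq ->]|[-> [_ [w [_ ws /shift_size_cat [h1 h2]]]]]]].
    lia.
  by split; apply: trunc_log2_subn_le; lia.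
- by case: n' => // [[_ /shift_size_weq ->]]; lia.
- case=> c /shift_size_cat /= [h1 h2].
  have := @trunc_log2_subn_le (shift_size u) (shift_size v) 0.
  have := @trunc_log2_subn_le (shift_size v) (shift_size u) 0.
  rewrite !subn0 expn0; lia.
Qed.

Lemma gpath_log_excess n a b : path n a b -> log_excess b <= log_excess a + n.
Proof.
elim=> {n a b} [[u o] [v o'] [/= <- /shift_size_weq uv] | n a b c ab _ IH].
  by rewrite /log_excess /= uv addn0.
by case: ab => /cadj0_log_excess [h1 h2]; lia.
Qed.

End LogShift.

Theorem rel_hyperbolic_meet_clique J J' : rel_hyperbolic e P ->
  J \in P -> J' \in P -> J != J' -> {in J :&: J' &, forall s t, s != t -> e s t}.
Proof.
move=> [d hyp] JP J'P JJ' s t; rewrite !inE => /andP [sJ sJ'] /andP [tJ tJ'] st.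
apply: contraT => nst; pose m := 2 * d + 2.
pose g := alt_word s t (2 ^ m.+1).
have size_g : size g = 2 ^ m.+1 by apply: size_alt_word.
have [dih_g _] := dih_word_alt_word (2 ^ m.+1) st.
have g_ne1 : ~ weq g [::].
  move/(weq_dih_word e_sym nst); rewrite dih_g => -[_ /(Nat2Z.inj _ 0) /eqP].
  by rewrite expn_eq0.
have g_horiz K : K \in P -> s \in K -> t \in K ->
    path 1 (g, Some (K, m)) ([::], Some (K, m)).
  move=> KP sK tK; apply: gpathS (gpath0 adj (cveq_refl _)).
  left; do 2 split => //; right; do 2 split => //.
  exists (rev g); split; last exact: weq_cat_rev.
    by rewrite all_rev all_alt_word.
  by rewrite size_rev size_g.
pose X := ([::], None) : cvert T; pose Y := (g, None) : cvert T.
pose M := ([::], Some (J, m)) : cvert T; pose M' := ([::], Some (J', m)) : cvert T.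
have pXY : path (2 ^ m.+1) X Y by rewrite -size_g; apply: gpath_cayley.
have pXM : path m.+1 X M by apply: gpath_horoball.
have pXM' : path m.+1 X M' by apply: gpath_horoball.
have pYM : path (m.+1 + 1) Y M.
  exact: gpath_cat (gpath_horoball g m JP) (g_horiz J JP sJ tJ).
have pYM' : path (m.+1 + 1) Y M'.
  exact: gpath_cat (gpath_horoball g m J'P) (g_horiz J' J'P sJ' tJ').
have pMM' : path (m.+1 + m.+1) M M' by apply: gpath_cat (gpath_rev pXM) pXM'.
have [dXY DXY] := exists_dist pXY; have [dMM' DMM'] := exists_dist pMM'.
have [dXM DXM] := exists_dist pXM; have [dXM' DXM'] := exists_dist pXM'.
have [dYM DYM] := exists_dist pYM; have [dYM' DYM'] := exists_dist pYM'.
have dXY_ge : m.+1 <= dXY.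
  have := gpath_log_excess nst DXY.1; rewrite /log_excess /shift_size /dih_shift /= dih_g.
  by rewrite Z.abs_eq ?Nat2Z.id ?trunc_expnK ?subn0 //; apply: Zle_0_nat.
have dMM'_ge : m.+1 + m.+1 <= dMM'.
  have MM' : horoball M != horoball M' by apply: contra JJ' => /eqP [->].
  by have [_ _ /(_ MM')] := gpath_depth DMM'.1.
have := hyp X Y M M' _ _ _ _ _ _ DXY DMM' DXM DYM' DXM' DYM.
have := DXM.2 _ pXM; have := DXM'.2 _ pXM'; have := DYM.2 _ pYM; have := DYM'.2 _ pYM'.
move: dXY_ge dMM'_ge; rewrite /m; clear -d; lia.
Qed.

End CuspedSpace.

(** * Splitting along a component *)

Section SplittingAlongComponent.
Variables (T : finType) (e : rel T).

Variables (A B : {set T}) (z : T).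
Hypotheses (e_sym : symmetric e) (AB : A \subset B) (zA : z \notin A).
Local Notation C := (component e (~: A) z).

Lemma component_notin v : v \in C -> v \notin A.
Proof. by rewrite inE => /connect_induced_mem; rewrite !inE; apply. Qed.

Lemma component_split_edge u v : e u v ->
  (u \in C :|: A) && (v \in C :|: A) || (u \in ~: C :|: B) && (v \in ~: C :|: B).
Proof.
move=> uv; rewrite !in_setU !in_setC.
case: (boolP (u \in A)) => uA.
  by rewrite (subsetP AB u uA) !orbT; case: (v \in C); rewrite ?orbT.
case: (boolP (v \in A)) => vA.
  by rewrite (subsetP AB v vA) !orbT; case: (u \in C); rewrite ?orbT.
have -> : (u \in C) = (v \in C) by apply: component_edge_eq; rewrite ?inE.
by case: (v \in C); rewrite ?orbT.
Qed.

Lemma component_split_meet : (C :|: A) :&: (~: C :|: B) \subset B.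
Proof.
apply/subsetP => v; rewrite !inE => /andP [/orP [vC | vA] /orP [nvC | //]].
- by rewrite vC in nvC.
- exact: (subsetP AB).
Qed.

Lemma component_split_side (J : {set T}) :
  {in J :\: A &, forall p q, connect (induced_rel e (~: A)) p q} ->
  (J \subset C :|: A) || (J \subset ~: C :|: B).
Proof.
move=> Jconn; case: (pickP [pred v | v \in J :&: C]) => [p | JC]; last first.
  by apply/orP; right; apply/subsetP => q qJ; move: (JC q); rewrite !inE qJ => /= ->.
rewrite /= in_setI => /andP [pJ pC]; apply/orP; left; apply/subsetP => q qJ.
rewrite in_setU; case: (boolP (q \in A)) => qA; rewrite ?orbT // orbF.
move: (pC); rewrite !inE => /connect_trans; apply; apply: Jconn; rewrite !inE ?qA ?qJ //.
by rewrite pJ component_notin.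
Qed.

Lemma component_split_properl : separates e A -> C :|: A != [set: T].
Proof.
case=> x [y [xA yA nxy]]; apply/negP => /eqP CT.
have : (x \in C :|: A) && (y \in C :|: A) by rewrite CT !inE.
rewrite !inE (negbTE xA) (negbTE yA) !orbF => /andP [zx zy]; case/negP: nxy.
by apply: connect_trans zy; rewrite (sym_connect_sym (induced_rel_sym e_sym _)).
Qed.

Lemma component_split_properr : z \notin B -> ~: C :|: B != [set: T].
Proof.
move=> zB; apply/negP => /eqP CT.
have : z \in ~: C :|: B by rewrite CT inE.
by rewrite !inE connect0 (negbTE zB).
Qed.

End SplittingAlongComponent.

Lemma peripheral_not_separated (T : finType) (e : rel T) (P : {set {set T}})
    (J J0 A : {set T}) :
  symmetric e -> irreflexive e -> rel_hyperbolic e P ->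
  J \in P -> J0 \in P -> J != J0 -> one_ended e J -> A \subset J0 ->
  {in J :\: A &, forall p q, connect (induced_rel e (~: A)) p q}.
Proof.
move=> e_sym e_irr relhyp JP J0P JJ0 oneJ AJ0 p q pJA qJA.
have JA_clique : {in J :&: A &, forall p q, p != q -> e p q}.
  move=> a b /setIP [aJ aA] /setIP [bJ bA].
  apply: (rel_hyperbolic_meet_clique e_sym relhyp JP J0P JJ0);
  by rewrite inE ?aJ ?bJ (subsetP AJ0).
have JA_sub : J :\: A \subset ~: A by apply/subsetP => v; rewrite !inE => /andP [].
apply: (connect_induced_subset JA_sub).
have := one_ended_clique_connected e_sym e_irr oneJ JA_clique.
by rewrite setDIr setDv set0U; apply.
Qed.

Theorem lemma3p4 (T : finType) (e : rel T)
  (e_sym : symmetric e) (e_irr : irreflexive e)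
  (JJ : {set {set T}})
  (JJ_proper : forall J, J \in JJ -> J != [set: T])
  (one_end : one_ended e [set: T])
  (relhyp : rel_hyperbolic e JJ)
  (P_one_end : forall J, J \in JJ -> one_ended e J)
  (J0 : {set T}) (J0_in : J0 \in JJ)
  (sep : exists A : {set T}, A \subset J0 /\ separates e A) :
  exists G1 G2 : {set T},
    [/\ G1 :|: G2 = [set: T],
        (forall u v, e u v -> (u \in G1) && (v \in G1) || (u \in G2) && (v \in G2)),
        G1 != [set: T] /\ G2 != [set: T],
        G1 :&: G2 \subset J0 &
        forall J, J \in JJ -> (J \subset G1) || (J \subset G2)].
Proof.
case: sep => A [AJ0 sepA].
have [z zJ0] : exists z, z \notin J0.
  apply/existsP; apply: contraR (JJ_proper J0 J0_in) => /existsPn J0T.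
  by apply/eqP/setP => v; rewrite inE; apply/negPn/J0T.
have zA : z \notin A by apply: contra zJ0; apply: (subsetP AJ0).
pose C := component e (~: A) z.
exists (C :|: A), (~: C :|: J0); split.
- by rewrite setUACA setUCr setTU.
- exact: component_split_edge.
- by split; [apply: component_split_properl | apply: component_split_properr].
- exact: component_split_meet.
move=> J JJ_J; case: (eqVneq J J0) => [->|JJ0]; first by rewrite subsetUr orbT.
apply: component_split_side => //.
exact: (peripheral_not_separated e_sym e_irr relhyp JJ_J J0_in JJ0 (P_one_end J JJ_J)).
Qed.
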